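(* Let $S=\{v_1,\ldots,v_n\}\subset\mathbb Z^n$ be an orthogonal subset with $|V_\alpha|\ge2$ for all $\alpha$. Let $i\in\mathcal P_2$ with $E_i=\{s,t\}$ and $|\langle v_s,e_i\rangle|=|\langle v_t,e_i\rangle|=1$. Then, up to a change of basis of $\mathbb Z^n$ and negation of $v_s$ or $v_t$, $v_s=e_i+e_j$ and $v_t=e_i-e_j$ for some $j\in\mathcal P_2$.
   Context: $\mathbb Z^n$ carries the standard dot product with standard basis $e_1,\ldots,e_n$. $S$ is orthogonal if $\langle v_\alpha,v_\alpha\rangle\ge1$ for all $\alpha$ and $\langle v_\alpha,v_\beta\rangle=0$ for $\alpha\ne\beta$. $V_\alpha=\{j:\langle v_\alpha,e_j\rangle\ne0\}$, $E_j=\{\alpha:\langle v_\alpha,e_j\rangle\ne0\}$, $\mathcal P_2=\{j:|E_j|=2\}$. A change of basis of $\mathbb Z^n$ means replacing the standard basis by another orthonormal basis (a signed permutation of coordinates). *)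

From mathcomp Require Import all_boot all_order all_algebra all_fingroup.
Set Implicit Arguments. Unset Strict Implicit. Unset Printing Implicit Defensive.
Import Order.TTheory GRing.Theory Num.Theory.
Local Open Scope ring_scope.

(* Vectors of Z^n are functions 'I_n -> int (x k = <x, e_k>).
   A family S = {v_1,...,v_n} is v : 'I_n -> ('I_n -> int), v a k = <v_a, e_k>. *)

Definition dot n (x y : 'I_n -> int) : int := \sum_(k < n) x k * y k.

Definition e n (j : 'I_n) : 'I_n -> int := fun k => (k == j)%:Z.

Definition orthogonal_family n (v : 'I_n -> 'I_n -> int) : Prop :=
  (forall a, 1 <= dot (v a) (v a)) /\
  (forall a b, a != b -> dot (v a) (v b) = 0).

Definition Vset n (v : 'I_n -> 'I_n -> int) (a : 'I_n) : {set 'I_n} :=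
  [set j | v a j != 0].

Definition Eset n (v : 'I_n -> 'I_n -> int) (j : 'I_n) : {set 'I_n} :=
  [set a | v a j != 0].

Definition P2 n (v : 'I_n -> 'I_n -> int) : {set 'I_n} :=
  [set j | #|Eset v j| == 2%N].

(* Change of basis of Z^n to another orthonormal basis = signed permutation
   of coordinates: the new k-th coordinate of x is eps k * x (p k). *)
Definition sign_ok (c : int) : Prop := c = 1 \/ c = -1.

Definition sperm n (p : 'S_n) (eps : 'I_n -> int) (x : 'I_n -> int) : 'I_n -> int :=
  fun k => eps k * x (p k).

From mathcomp Require Import all_boot all_order all_algebra all_fingroup.
From mathcomp Require Import ring lra zify.
Set Implicit Arguments. Unset Strict Implicit. Unset Printing Implicit Defensive.
Import Order.TTheory GRing.Theory Num.Theory.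
Local Open Scope ring_scope.

(* An orthogonal family of n nonzero vectors is an orthogonal basis of Q^n, so
   writing N_a = <v_a, v_a> the matrix with rows v_a / sqrt N_a is orthogonal and
   its columns are unit vectors: sum_a <v_a, e_k>^2 / N_a = 1 for every k.
   In column i only v_s and v_t contribute, each with weight 1/N; since
   |V_s|, |V_t| >= 2 forces N_s, N_t >= 2, the equation 1/N_s + 1/N_t = 1 gives
   N_s = N_t = 2, i.e. v_s = +-e_i +- e_j and v_t = +-e_i +- e_j', and
   orthogonality of v_s and v_t forces j = j'. Column j then already has weight
   1/2 + 1/2 = 1 from v_s and v_t, so no other v_a meets e_j and j is in P_2.
   Negating v_s, v_t and e_j finally brings the pair to e_i + e_j, e_i - e_j. *)

Lemma dot_split2 n (w u : 'I_n -> int) (i j : 'I_n) : j != i ->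
  dot w u = w i * u i + w j * u j + \sum_(k | (k != i) && (k != j)) w k * u k.
Proof.
move=> ji; rewrite /dot (bigD1 i) //= (bigD1 j) /=; last by rewrite ji.
by rewrite addrA.
Qed.

Lemma dot_support2 n (w u : 'I_n -> int) (i j : 'I_n) : j != i ->
  (forall k, k != i -> k != j -> w k = 0) -> dot w u = w i * u i + w j * u j.
Proof.
move=> ji w0; rewrite (dot_split2 w u ji) big1 ?addr0 // => k /andP[ki kj].
by rewrite w0 ?mul0r.
Qed.

Lemma dot_self_ge2 n (w : 'I_n -> int) (i j : 'I_n) : j != i ->
  w i != 0 -> w j != 0 -> 2 <= dot w w.
Proof.
move=> ji wi wj; rewrite (dot_split2 w w ji).
have : 0 <= \sum_(k | (k != i) && (k != j)) w k * w k by apply: sumr_ge0 => k _; nia.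
have : 1 <= w i * w i by nia.
have : 1 <= w j * w j by nia.
lia.
Qed.

Lemma dot_self_eq2_support n (w : 'I_n -> int) (i j : 'I_n) : j != i ->
  w i * w i = 1 -> w j != 0 -> dot w w = 2 ->
  w j * w j = 1 /\ forall k, k != i -> k != j -> w k = 0.
Proof.
move=> ji wi1 wj; rewrite (dot_split2 w w ji) wi1.
set rest := \sum_(k | _) _ => N2.
have rest_ge0 k : (k != i) && (k != j) -> 0 <= w k * w k by move=> _; nia.
have : 0 <= rest by apply: sumr_ge0.
have : 1 <= w j * w j by nia.
move=> wj1 r0; have /eqP rest0 : rest == 0 by lia.
split; first lia.
move=> k ki kj; have kij : (k != i) && (k != j) by rewrite ki kj.
by have /eqP := psumr_eq0P rest_ge0 rest0 kij; rewrite mulf_eq0 orbb => /eqP.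
Qed.

(* If j' <> j, only coordinate i contributes to the dot product. *)
Lemma dot_eq0_support2_eq n (w u : 'I_n -> int) (i j j' : 'I_n) :
  j != i -> j' != i -> w i != 0 -> u i != 0 ->
  (forall k, k != i -> k != j -> w k = 0) ->
  (forall k, k != i -> k != j' -> u k = 0) ->
  dot w u = 0 -> j' = j.
Proof.
move=> ji j'i wi ui w0 u0; rewrite (dot_support2 u ji w0).
apply: contra_eq => j'j; rewrite (u0 j ji); last by rewrite eq_sym.
by rewrite mulr0 addr0 mulf_neq0.
Qed.

Lemma exists_other_support n (w : 'I_n -> int) (i : 'I_n) :
  (2 <= #|[set j | w j != 0]|)%N -> exists2 j, j != i & w j != 0.
Proof.
move=> supp2; case: (pickP (fun j => (j != i) && (w j != 0))) => [j /andP[]|none].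
  by exists j.
suff /subset_leq_card : [set j | w j != 0] \subset [set i].
  by rewrite cards1 => /(leq_trans supp2).
apply/subsetP => j; rewrite !inE => wj.
by have := none j; rewrite wj andbT; case: eqP.
Qed.

Lemma invr_sum_eq1 (x y : int) : 2 <= x -> 2 <= y ->
  (x%:~R : rat)^-1 + (y%:~R)^-1 = 1 -> x = 2 /\ y = 2.
Proof.
move=> x2 y2 sum1.
have : x + y = x * y.
  apply/eqP; rewrite -(eqr_int rat) rmorphD rmorphM /=; apply/eqP.
  have x0 : (x%:~R : rat) != 0 by rewrite intr_eq0; apply/eqP; lia.
  have y0 : (y%:~R : rat) != 0 by rewrite intr_eq0; apply/eqP; lia.
  have -> : (x%:~R + y%:~R : rat) = (x%:~R^-1 + y%:~R^-1) * (x%:~R * y%:~R).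
    by field; rewrite x0 y0.
  by rewrite sum1 mul1r.
nia.
Qed.

Lemma sign_ok_sqr (x : int) : x * x = 1 -> sign_ok x.
Proof.
move=> xx; have : x ^+ 2 == 1 by rewrite expr2 xx.
by rewrite sqrf_eq1 => /orP[] /eqP ->; [left | right].
Qed.

Lemma mem_P2_sperm n (p : 'S_n) (eps : 'I_n -> int) (v : 'I_n -> 'I_n -> int) (j : 'I_n) :
  (forall k, eps k != 0) -> (j \in P2 (fun a => sperm p eps (v a))) = (p j \in P2 v).
Proof.
move=> eps0; rewrite !inE (_ : Eset _ j = Eset v (p j)) //.
by apply/setP => a; rewrite !inE /sperm mulf_eq0 negb_or eps0.
Qed.

Lemma sperm_pair_normal_form n (x y : 'I_n -> int) (i j : 'I_n) : j != i ->
  x i * x i = 1 -> x j * x j = 1 -> y i * y i = 1 ->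
  (forall k, k != i -> k != j -> x k = 0) ->
  (forall k, k != i -> k != j -> y k = 0) ->
  x i * y i + x j * y j = 0 ->
  exists2 eps : 'I_n -> int, forall k, sign_ok (eps k) &
    (forall k, sperm 1 eps (fun l => x i * x l) k = e i k + e j k) /\
    (forall k, sperm 1 eps (fun l => y i * y l) k = e i k - e j k).
Proof.
move=> ji xi1 xj1 yi1 x0 y0 orth.
exists (fun k => if k == j then x i * x j else 1).
  move=> k; case: eqP => _; last by left.
  by apply: sign_ok_sqr; rewrite mulrACA xi1 xj1.
split=> k; rewrite /sperm perm1 /e.
  have [->|kj] := eqVneq k j; first by rewrite (negbTE ji) mulrACA xi1 xj1.
  have [->|ki] := eqVneq k i; first by rewrite mul1r xi1.
  by rewrite (x0 k) // !mulr0.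
have [->|kj] := eqVneq k j.
  rewrite (negbTE ji).
  have -> : x i * x j * (y i * y j) = x i * y i * (x j * y j) by ring.
  by rewrite -(addr0_eq orth) mulrN mulrACA xi1 yi1.
have [->|ki] := eqVneq k i; first by rewrite mul1r yi1.
by rewrite (y0 k) // !mulr0.
Qed.

Definition coord_weight n (v : 'I_n -> 'I_n -> int) (a k : 'I_n) : rat :=
  (v a k * v a k)%:~R / (dot (v a) (v a))%:~R.

Section OrthogonalFamily.

Variables (n : nat) (v : 'I_n -> 'I_n -> int).
Hypothesis hS : orthogonal_family v.

Lemma orthogonal_family_coord_sum (k l : 'I_n) :
  \sum_a ((v a k * v a l)%:~R / (dot (v a) (v a))%:~R : rat) = (k == l)%:R.
Proof.
case: hS => hN hO.
pose M : 'M[rat]_n := \matrix_(a, k) (v a k)%:~R.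
pose D : 'M[rat]_n := diag_mx (\row_a ((dot (v a) (v a))%:~R)^-1).
have MMtD : M *m (M^T *m D) = 1%:M.
  apply/matrixP => a c; rewrite mul_mx_diag !mxE.
  under eq_bigr => k0 _ do rewrite !mxE mulrA -rmorphM.
  rewrite -mulr_suml -rmorph_sum -/(dot (v a) (v c)).
  case: eqVneq => [->|ne]; last by rewrite hO // mul0r.
  by rewrite divff // intr_eq0 gt_eqF // (lt_le_trans ltr01 (hN c)).
have := congr1 (fun A : 'M[rat]_n => A k l) (mulmx1C MMtD).
rewrite /= !mxE => <-; apply: eq_bigr => a _.
by rewrite mul_mx_diag !mxE intrM mulrAC.
Qed.

Lemma coord_weight_sum (k : 'I_n) : \sum_a coord_weight v a k = 1.
Proof. by rewrite (orthogonal_family_coord_sum k k) eqxx. Qed.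

Lemma coord_weight_ge0 (a k : 'I_n) : 0 <= coord_weight v a k.
Proof.
apply: divr_ge0; rewrite ler0z; first nia.
by have := hS.1 a; lia.
Qed.

Lemma coord_weight_eq0 (a k : 'I_n) : (coord_weight v a k == 0) = (v a k == 0).
Proof.
have Na : dot (v a) (v a) != 0 by apply/eqP; have := hS.1 a; lia.
by rewrite mulf_eq0 invr_eq0 !intr_eq0 (negbTE Na) orbF mulf_eq0 orbb.
Qed.

(* The weights of a column are nonnegative and sum to 1. *)
Lemma coord_weight_pair_eq1 (s t k : 'I_n) : s != t ->
  (coord_weight v s k + coord_weight v t k = 1) <-> Eset v k \subset [set s; t].
Proof.
move=> st; have := coord_weight_sum k.
rewrite (bigD1 s) // (bigD1 t) /=; last by rewrite eq_sym st.
set rest := \sum_(a | _) _; rewrite addrA => sum1.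
have rest0 : (rest == 0) = (Eset v k \subset [set s; t]).
  apply/eqP/subsetP => [r0 a|sub].
    rewrite !inE; apply: contraTT => ast; rewrite negbK -coord_weight_eq0; apply/eqP.
    by apply: (psumr_eq0P (fun b _ => coord_weight_ge0 b k) r0); rewrite -negb_or.
  rewrite /rest big1 // => a ast; apply/eqP; rewrite coord_weight_eq0.
  apply: contraTT ast => vak; rewrite -negb_or negbK -in_set2.
  by apply: sub; rewrite inE.
split => [pair1|sub].
  by rewrite -rest0; apply/eqP; move: sum1; rewrite pair1; lra.
by move: sub; rewrite -rest0 -sum1 => /eqP->; rewrite addr0.
Qed.

Lemma dot_self_eq2_of_coord_pair (i s t : 'I_n) : s != t ->
  Eset v i = [set s; t] -> v s i * v s i = 1 -> v t i * v t i = 1 ->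
  2 <= dot (v s) (v s) -> 2 <= dot (v t) (v t) ->
  dot (v s) (v s) = 2 /\ dot (v t) (v t) = 2.
Proof.
move=> st Ei si1 ti1 Ns2 Nt2; apply: invr_sum_eq1 => //.
have /(coord_weight_pair_eq1 i st) : Eset v i \subset [set s; t] by rewrite Ei.
by rewrite /coord_weight si1 ti1 !mul1r.
Qed.

Lemma mem_P2_of_coord_pair (j s t : 'I_n) : s != t ->
  v s j * v s j = 1 -> v t j * v t j = 1 ->
  dot (v s) (v s) = 2 -> dot (v t) (v t) = 2 -> j \in P2 v.
Proof.
move=> st sj1 tj1 Ns2 Nt2.
have sub : Eset v j \subset [set s; t].
  by apply/(coord_weight_pair_eq1 j st); rewrite /coord_weight sj1 tj1 Ns2 Nt2.
suff Ej : Eset v j = [set s; t] by rewrite inE Ej cards2 st.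
apply/eqP; rewrite eqEsubset sub; apply/subsetP => a; rewrite !inE.
by case/orP => /eqP->; apply/eqP => a0; [rewrite a0 in sj1 | rewrite a0 in tj1].
Qed.

End OrthogonalFamily.

Theorem lemma4p2 (n : nat) (v : 'I_n -> 'I_n -> int)
  (hS : orthogonal_family v)
  (hV : forall a : 'I_n, (2 <= #|Vset v a|)%N)
  (i s t : 'I_n)
  (hi : i \in P2 v)
  (hE : Eset v i = [set s; t])
  (hs : `|v s i| = 1) (ht : `|v t i| = 1) :
  exists (p : 'S_n) (eps : 'I_n -> int) (a b : int) (j : 'I_n),
    (forall k, sign_ok (eps k)) /\ sign_ok a /\ sign_ok b /\
    j \in P2 (fun al => sperm p eps (v al)) /\
    (forall k, sperm p eps (fun l => a * v s l) k = e i k + e j k) /\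
    (forall k, sperm p eps (fun l => b * v t l) k = e i k - e j k).
Proof.
have st : s != t by move: hi; rewrite inE hE cards2; case: (s != t).
have si1 : v s i * v s i = 1 by nia.
have ti1 : v t i * v t i = 1 by nia.
have vsi : v s i != 0 by apply/eqP => vsi0; rewrite vsi0 in si1.
have vti : v t i != 0 by apply/eqP => vti0; rewrite vti0 in ti1.
have [j ji vsj] := exists_other_support i (hV s).
have [j' j'i vtj'] := exists_other_support i (hV t).
have [Ns2 Nt2] := dot_self_eq2_of_coord_pair hS st hE si1 ti1
  (dot_self_ge2 ji vsi vsj) (dot_self_ge2 j'i vti vtj').
have [sj1 vs0] := dot_self_eq2_support ji si1 vsj Ns2.
have [tj1 vt0] := dot_self_eq2_support j'i ti1 vtj' Nt2.
have j'j := dot_eq0_support2_eq ji j'i vsi vti vs0 vt0 (hS.2 s t st); subst j'.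
have orth : v s i * v t i + v s j * v t j = 0 by rewrite -(dot_support2 _ ji vs0) hS.2.
have [eps eps_ok [vsE vtE]] := sperm_pair_normal_form ji si1 sj1 ti1 vs0 vt0 orth.
exists 1%g, eps, (v s i), (v t i), j.
have eps0 k : eps k != 0 by case: (eps_ok k) => ->.
do !split => //; [exact: sign_ok_sqr si1 | exact: sign_ok_sqr ti1 |].
by rewrite mem_P2_sperm // perm1; apply: (mem_P2_of_coord_pair hS st sj1 tj1 Ns2 Nt2).
Qed.
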